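(* Let $m \geq 2$ be an integer, let $k \in \{1, 2, \ldots, m-1\}$, and let $p \in \left(\frac{k}{m}, \frac{k+1}{m}\right]$. Then $$\mathbb{P}_{X \sim B(m,p)}\big[X \geq mp\big] \;\geq\; \mathbb{P}_{X \sim B(m,\frac{k}{m})}\big[X \geq k+1\big].$$
   Context: $B(m,p)$ denotes the binomial distribution with $m$ trials and success probability $p$: $\mathbb{P}[X=j]=\binom{m}{j}p^j(1-p)^{m-j}$ for $j=0,\dots,m$; its mean is $mp$. *)

From HB Require Import structures.
From mathcomp Require Import all_boot all_order all_algebra.
Set Implicit Arguments. Unset Strict Implicit. Unset Printing Implicit Defensive.
Import Order.TTheory GRing.Theory Num.Theory.
Local Open Scope ring_scope.

Definition binom_pmf (R : realFieldType) (m : nat) (p : R) (j : nat) : R :=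
  ('C(m, j))%:R * p ^+ j * (1 - p) ^+ (m - j).

Definition binom_prob (R : realFieldType) (m : nat) (p : R) (A : pred nat) : R :=
  \sum_(j < m.+1 | A j) binom_pmf m p j.

From mathcomp Require Import all_boot all_order all_algebra.
From mathcomp Require Import ring zify.
Set Implicit Arguments. Unset Strict Implicit. Unset Printing Implicit Defensive.
Import Order.TTheory GRing.Theory Num.Theory.
Local Open Scope ring_scope.

(* Write T_m(j, p) = P[X >= j] for X ~ B(m, p).  The hypotheses
   on p say exactly that k < m p <= k + 1, so an integer j satisfies j >= m p
   if and only if j >= k + 1.  Both sides of the theorem are therefore tails at
   the same threshold, and the claim reads T_m(k+1, k/m) <= T_m(k+1, p) with
   k/m < p.  It thus suffices to show that binomial tails are nondecreasing in
   the success probability (first-order stochastic dominance).  This follows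
   by induction on m from Pascal's recurrence for the tails,
       T_{m+1}(j+1, p) = p T_m(j, p) + (1 - p) T_m(j+1, p),
   together with T_m(0, p) = 1 and the monotonicity of T_m in j. *)

Section BinomialTail.
Variable R : realFieldType.
Implicit Types (p q : R) (m i j : nat).

Definition binom_tail m j p : R := binom_prob m p (fun i => (j <= i)%N).

Lemma binom_tailE m j p :
  binom_tail m j p = \sum_(i < m.+1) (if (j <= i)%N then binom_pmf m p i else 0).
Proof. by rewrite /binom_tail /binom_prob big_mkcond. Qed.

Lemma binom_pmf_out m p i : (m < i)%N -> binom_pmf m p i = 0.
Proof. by move=> lt_m_i; rewrite /binom_pmf bin_small // !mul0r. Qed.

Lemma binom_pmf_ge0 m p i : 0 <= p -> p <= 1 -> 0 <= binom_pmf m p i.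
Proof. by move=> p_ge0 p_le1; rewrite /binom_pmf !mulr_ge0 ?exprn_ge0 ?subr_ge0. Qed.

(* Pascal's rule for the mass function: the last trial either succeeds or fails. *)
Lemma binom_pmfS m p i :
  binom_pmf m.+1 p i.+1 = p * binom_pmf m p i + (1 - p) * binom_pmf m p i.+1.
Proof.
rewrite /binom_pmf binS natrD subSS.
have [lt_i_m | le_m_i] := ltnP i m.
  have -> : (m - i = (m - i.+1).+1)%N by lia.
  by rewrite !exprS; ring.
by rewrite (@bin_small m i.+1) ?ltnS // !mul0r mulr0 add0r exprS; ring.
Qed.

(* The total mass is 1, by the binomial theorem applied to (p + (1 - p))^m. *)
Lemma binom_tail0 m p : binom_tail m 0 p = 1.
Proof.
rewrite binom_tailE -[RHS](expr1n R m) -[1 in RHS](subrK p) exprDn.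
by apply: eq_bigr => i _ /=; rewrite /binom_pmf -mulr_natl; ring.
Qed.

Lemma binom_tailS m j p :
  binom_tail m.+1 j.+1 p = p * binom_tail m j p + (1 - p) * binom_tail m j.+1 p.
Proof.
rewrite !binom_tailE big_ord_recl ltn0 add0r.
rewrite [in X in _ = _ + _ * X](big_ord_recl m) ltn0 add0r.
have -> : \sum_(i < m.+1)
    (if (j < lift ord0 i)%N then binom_pmf m.+1 p (lift ord0 i) else 0)
  = \sum_(i < m.+1) (p * (if (j <= i)%N then binom_pmf m p i else 0)
       + (1 - p) * (if (j < i.+1)%N then binom_pmf m p i.+1 else 0)).
  apply: eq_bigr => i _; rewrite lift0 ltnS.
  by case: ifP => _; rewrite ?binom_pmfS ?mulr0 ?addr0.
rewrite big_split -!mulr_sumr; congr (_ + _ * _).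
rewrite (big_ord_recr m) binom_pmf_out ?ltnSn // if_same Monoid.mulm1.
by apply: eq_bigr => i _; rewrite lift0.
Qed.

Lemma binom_tail_decr m j p : 0 <= p -> p <= 1 ->
  binom_tail m j.+1 p <= binom_tail m j p.
Proof.
move=> p_ge0 p_le1; rewrite !binom_tailE; apply: ler_sum => i _.
case: ifP => [lt_j_i | _]; first by rewrite (ltnW lt_j_i).
by case: ifP => _ //; apply: binom_pmf_ge0.
Qed.

(* Stochastic dominance: binomial tails are nondecreasing in the success
   probability.  In the inductive step, the difference of the two recurrences
   splits into three nonnegative terms. *)
Lemma binom_tail_mono p q : 0 <= p -> p <= q -> q <= 1 ->
  forall m j, binom_tail m j p <= binom_tail m j q.
Proof.
move=> p_ge0 le_pq q_le1; have q_ge0 : 0 <= q := le_trans p_ge0 le_pq.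
elim=> [|m IHm] [|j]; rewrite ?binom_tail0 //.
  by rewrite !binom_tailE !big_ord1.
rewrite !binom_tailS -subr_ge0.
have -> : q * binom_tail m j q + (1 - q) * binom_tail m j.+1 q
          - (p * binom_tail m j p + (1 - p) * binom_tail m j.+1 p)
  = q * (binom_tail m j q - binom_tail m j p)
    + (1 - q) * (binom_tail m j.+1 q - binom_tail m j.+1 p)
    + (q - p) * (binom_tail m j p - binom_tail m j.+1 p) by ring.
have tail_p_decr := binom_tail_decr m j p_ge0 (le_trans le_pq q_le1).
by rewrite !addr_ge0 // mulr_ge0 // subr_ge0.
Qed.

End BinomialTail.

Theorem lemma1 (R : realFieldType) (m k : nat) (p : R) :
  (2 <= m)%N -> (1 <= k)%N -> (k <= m - 1)%N ->
  k%:R / m%:R < p -> p <= k.+1%:R / m%:R ->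
  binom_prob m (k%:R / m%:R) (fun j : nat => k.+1%:R <= (j%:R : R))
    <= binom_prob m p (fun j : nat => m%:R * p <= (j%:R : R)).
Proof.
move=> m_ge2 _ k_lt_m lt_q_p le_p_k1.
have m_gt0 : (0 < m%:R :> R) by rewrite ltr0n (leq_trans _ m_ge2).
have lt_k_mp : k%:R < m%:R * p by rewrite mulrC -ltr_pdivrMr.
have le_mp_k1 : m%:R * p <= k.+1%:R by rewrite mulrC -ler_pdivlMr.
have q_ge0 : 0 <= k%:R / m%:R :> R by rewrite divr_ge0 ?ler0n ?ltW.
have p_le1 : p <= 1.
  by apply: (le_trans le_p_k1); rewrite ler_pdivrMr // mul1r ler_nat; lia.
(* Both events are the tail event {X >= k + 1}. *)
have -> : binom_prob m (k%:R / m%:R) (fun j : nat => k.+1%:R <= (j%:R : R))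
          = binom_tail m k.+1 (k%:R / m%:R : R).
  by apply: eq_bigl => j; rewrite ler_nat.
have -> : binom_prob m p (fun j : nat => m%:R * p <= (j%:R : R))
          = binom_tail m k.+1 p.
  apply: eq_bigl => j; apply/idP/idP => [le_mp_j | lt_k_j].
    by rewrite -(ltr_nat R); apply: lt_le_trans le_mp_j.
  by apply: (le_trans le_mp_k1); rewrite ler_nat.
exact: binom_tail_mono q_ge0 (ltW lt_q_p) p_le1 m k.+1.
Qed.
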